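(* Let $\mathcal L>0$, $m_\pm>0$, $\rho_\pm>0$, $S_+<0<S_-$, $\lambda_\pm=\sqrt{\rho_\pm/m_\pm}$, and $S_I=0$. Consider the ODE system $\dot q_1=\mathcal H_1^{\rm p}(q_1,q_2)$, $\dot q_2=\mathcal H_2^{\rm p}(q_1,q_2)$ with \[ \mathcal H_1^{\rm p}(q_1,q_2)=\tfrac12\Big(-\tfrac{S_+}{\rho_+}m_+\lambda_+\tanh\big(\lambda_+\tfrac{q_2-q_1}{2}\big)-\tfrac{S_-}{\rho_-}m_-\lambda_-\tanh(\lambda_-q_1)-S_I\Big), \] \[ \mathcal H_2^{\rm p}(q_1,q_2)=\tfrac12\Big(\tfrac{S_+}{\rho_+}m_+\lambda_+\tanh\big(\lambda_+\tfrac{q_2-q_1}{2}\big)+\tfrac{S_-}{\rho_-}m_-\lambda_-\tanh(\lambda_-(\mathcal L-q_2))+S_I\Big), \] the function \[ \mathcal E(q_1,q_2)=\frac{\frac{S_-}{\rho_-}m_-}{2}\ln\cosh(\lambda_-q_1)+\frac{\frac{S_-}{\rho_-}m_-}{2}\ln\cosh(\lambda_-(\mathcal L-q_2))-\frac{S_+}{\rho_+}m_+\ln\cosh\Big(\lambda_+\frac{q_2-q_1}{2}\Big)+\frac12S_I(q_1-q_2), \] and the set $\mathcal T=\{(q_1,q_2)\in\mathbb R^2: 0\le q_2\le\mathcal L,\ 0\le q_1\le q_2\}$. Then the system admits a unique symmetric stationary solution $(q_1^\star,q_2^\star)$, with $q_1^\star=\mathcal L-q_2^\star\in(0,\mathcal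 L/2)$, which is the global minimum of $\mathcal E$ on $\mathcal T$. Moreover, every solution with initial data $(q_1(0),q_2(0))\in\mathcal T$ converges to $(q_1^\star,q_2^\star)$ as $t\to\infty$.
   Context: A symmetric stationary solution is a pair $(q_1^\star,q_2^\star)$ with $\mathcal H_1^{\rm p}(q_1^\star,q_2^\star)=\mathcal H_2^{\rm p}(q_1^\star,q_2^\star)=0$ and $q_1^\star=\mathcal L-q_2^\star$. *)

From Stdlib Require Import Reals.
From Coquelicot Require Import Coquelicot.
Open Scope R_scope.

(* Parameters: L, m_+ (mp), m_- (mm), rho_+ (rp), rho_- (rm), S_+ (Sp),
   S_- (Sm), S_I (SI).  lambda_pm = sqrt (rho_pm / m_pm). *)

Definition lam (rho m : R) : R := sqrt (rho / m).

Definition H1p (L mp mm rp rm Sp Sm SI : R) (q1 q2 : R) : R :=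
  / 2 * ( - (Sp / rp) * mp * lam rp mp * tanh (lam rp mp * ((q2 - q1) / 2))
          - (Sm / rm) * mm * lam rm mm * tanh (lam rm mm * q1)
          - SI).

Definition H2p (L mp mm rp rm Sp Sm SI : R) (q1 q2 : R) : R :=
  / 2 * ( (Sp / rp) * mp * lam rp mp * tanh (lam rp mp * ((q2 - q1) / 2))
          + (Sm / rm) * mm * lam rm mm * tanh (lam rm mm * (L - q2))
          + SI).

Definition Ep (L mp mm rp rm Sp Sm SI : R) (q1 q2 : R) : R :=
  ((Sm / rm) * mm) / 2 * ln (cosh (lam rm mm * q1))
  + ((Sm / rm) * mm) / 2 * ln (cosh (lam rm mm * (L - q2)))
  - (Sp / rp) * mp * ln (cosh (lam rp mp * ((q2 - q1) / 2)))
  + / 2 * SI * (q1 - q2).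

Definition inT (L q1 q2 : R) : Prop := 0 <= q2 <= L /\ 0 <= q1 <= q2.

Definition sym_stationary (L mp mm rp rm Sp Sm SI : R) (q1 q2 : R) : Prop :=
  H1p L mp mm rp rm Sp Sm SI q1 q2 = 0 /\
  H2p L mp mm rp rm Sp Sm SI q1 q2 = 0 /\ q1 = L - q2.

Definition is_solution (L mp mm rp rm Sp Sm SI : R) (q1 q2 : R -> R) : Prop :=
  (forall t, 0 < t ->
     is_derive q1 t (H1p L mp mm rp rm Sp Sm SI (q1 t) (q2 t)) /\
     is_derive q2 t (H2p L mp mm rp rm Sp Sm SI (q1 t) (q2 t))) /\
  filterlim q1 (at_right 0) (locally (q1 0)) /\
  filterlim q2 (at_right 0) (locally (q2 0)).

From Stdlib Require Import Reals Lra Psatz.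
From Coquelicot Require Import Coquelicot.
Open Scope R_scope.

(* With [S_+ < 0 < S_-] the field [H = (H1p, H2p)] is minus the gradient of [Ep], a
   positive combination of [ln cosh] of affine maps, so [Ep] is convex and every
   stationary point is a global minimiser.  On the antidiagonal [q2 = L - q1]
   one has [H1p = - H2p], and [x |-> H2p x (L - x)] is strictly increasing,
   negative at [0] and positive at [L / 2]: this gives the unique symmetric
   stationary point.  Along a solution, [V = |q - q*|^2] is nonincreasing since
   [-H] is monotone; on the resulting bounded region the two outer [tanh] terms
   make [-H] strongly monotone, so [V' <= - k V] and [V -> 0]. *)

Lemma cosh_pos x : 0 < cosh x.
Proof. unfold cosh; pose proof (exp_pos x); pose proof (exp_pos (- x)); lra. Qed.

Lemma exp_opp_le_exp a : 0 <= a -> exp (- a) <= exp a.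
Proof.
  intros ha.
  assert (exp (- a) * exp a = 1) by (rewrite <- exp_plus, Rplus_opp_l; apply exp_0).
  pose proof (exp_ineq1_le a); pose proof (exp_pos (- a)); nra.
Qed.

Lemma cosh_le_exp_abs x : cosh x <= exp (Rabs x).
Proof.
  unfold cosh, Rabs; destruct (Rcase_abs x).
  - pose proof (exp_opp_le_exp (- x)) as h; rewrite Ropp_involutive in h; lra.
  - pose proof (exp_opp_le_exp x); lra.
Qed.

Lemma is_derive_tanh x : is_derive tanh x (/ cosh x ^ 2).
Proof.
  pose proof (exp_pos x) as hx; pose proof (Rinv_0_lt_compat _ hx).
  unfold tanh, cosh, sinh; auto_derive; rewrite exp_Ropp; [lra | field; split; nra].
Qed.

Lemma continuous_tanh x : continuous tanh x.
Proof. apply (ex_derive_continuous tanh); eexists; apply is_derive_tanh. Qed.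

Lemma tanh_lt x y : x < y -> tanh x < tanh y.
Proof.
  intros hxy; apply (incr_function tanh m_infty p_infty (fun t => / cosh t ^ 2)); try easy.
  - intros t _ _; apply is_derive_tanh.
  - intros t _ _; pose proof (cosh_pos t); apply Rlt_gt, Rinv_0_lt_compat; nra.
Qed.

Lemma tanh_strongly_monotone M x y : Rabs x <= M -> Rabs y <= M ->
  (x - y) ^ 2 / exp M ^ 2 <= (x - y) * (tanh x - tanh y).
Proof.
  intros hx hy.
  destruct (MVT_gen tanh y x (fun t => / cosh t ^ 2)) as [c [hc hmvt]].
  - intros t _; apply is_derive_tanh.
  - intros t _; apply continuity_pt_filterlim, continuous_tanh.
  - assert (hcM : Rabs c <= M).
    { apply Rabs_le_between in hx, hy; apply Rabs_le_between.
      pose proof (Rmax_lub y x M); pose proof (Rmin_glb y x (- M)); lra. }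
    assert (cosh c <= exp M).
    { apply (Rle_trans _ _ _ (cosh_le_exp_abs c)).
      destruct hcM as [hlt | ->]; [left; apply exp_increasing, hlt | lra]. }
    rewrite hmvt. pose proof (cosh_pos c); pose proof (pow2_ge_0 (x - y)).
    replace ((x - y) * (/ cosh c ^ 2 * (x - y))) with ((x - y) ^ 2 * / cosh c ^ 2) by ring.
    apply Rmult_le_compat_l; [lra|].
    apply Rinv_le_contravar; nra.
Qed.

Lemma tanh_monotone x y : 0 <= (x - y) * (tanh x - tanh y).
Proof.
  eapply Rle_trans; [|apply (tanh_strongly_monotone (Rmax (Rabs x) (Rabs y)))].
  - pose proof (exp_pos (Rmax (Rabs x) (Rabs y))).
    apply Rdiv_le_0_compat; [apply pow2_ge_0 | nra].
  - apply Rmax_l.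
  - apply Rmax_r.
Qed.

Lemma continuity_pt_of_derive f x l : is_derive f x l -> continuity_pt f x.
Proof. intros h; apply continuity_pt_filterlim, (ex_derive_continuous f); exists l; exact h. Qed.

Lemma above_tangent_of_derive_increasing (f df : R -> R) x y :
  (forall t, is_derive f t (df t)) -> (forall s t, s <= t -> df s <= df t) ->
  f x + df x * (y - x) <= f y.
Proof.
  intros hd hmono.
  destruct (MVT_gen f x y df) as [c [hc hmvt]].
  - intros t _; apply hd.
  - intros t _; apply (continuity_pt_of_derive f t (df t)), hd.
  - destruct (Rle_lt_dec x y) as [hxy | hyx].
    + rewrite Rmin_left, Rmax_right in hc by lra.
      pose proof (hmono x c (proj1 hc)); nra.
    + rewrite Rmin_right, Rmax_left in hc by lra.
      pose proof (hmono c x (proj2 hc)); nra.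
Qed.

Lemma lncosh_above_tangent x y : ln (cosh x) + tanh x * (y - x) <= ln (cosh y).
Proof.
  apply (above_tangent_of_derive_increasing (fun t => ln (cosh t)) tanh).
  - intros t. pose proof (cosh_pos t).
    unfold tanh, cosh, sinh in *; auto_derive; [lra | field; lra].
  - intros s t [hlt | ->]; [left; apply tanh_lt, hlt | lra].
Qed.

Lemma le_of_derive_nonpos (f df : R -> R) a b : a <= b ->
  (forall t, a <= t <= b -> is_derive f t (df t)) ->
  (forall t, a <= t <= b -> df t <= 0) -> f b <= f a.
Proof.
  intros hab hd hneg.
  destruct (MVT_gen f a b df) as [c [hc hmvt]];
    rewrite ?Rmin_left, ?Rmax_right in * by lra.
  - intros t ht; apply hd; lra.
  - intros t ht; apply (continuity_pt_of_derive f t (df t)), hd; lra.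
  - pose proof (hneg c hc); nra.
Qed.

Lemma is_derive_sqr_sub (f : R -> R) x l c : is_derive f x l ->
  is_derive (fun t => (f t - c) ^ 2) x (2 * (f x - c) * l).
Proof.
  intros hf.
  assert (hsq : is_derive (fun u => (u - c) ^ 2) (f x) (2 * (f x - c)))
    by (auto_derive; [easy | ring]).
  replace (2 * (f x - c) * l) with (l * (2 * (f x - c))) by ring.
  exact (is_derive_comp _ _ x _ _ hsq hf).
Qed.

Lemma gronwall_is_lim_0 (V dV : R -> R) t0 k : 0 < k ->
  (forall t, 0 <= V t) ->
  (forall t, t0 <= t -> is_derive V t (dV t)) ->
  (forall t, t0 <= t -> dV t <= - k * V t) ->
  is_lim V p_infty 0.
Proof.
  intros hk hV hd hrate.
  (* [V t * (1 + k (t - t0))] is nonincreasing, so [V] decays like [1 / t]. *)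
  assert (hW : forall t, t0 <= t -> V t * (1 + k * (t - t0)) <= V t0).
  { intros t ht.
    replace (V t0) with (V t0 * (1 + k * (t0 - t0))) by ring.
    apply (le_of_derive_nonpos (fun s => V s * (1 + k * (s - t0)))
             (fun s => dV s * (1 + k * (s - t0)) + V s * k) t0 t ht).
    - intros s hs.
      assert (hl : is_derive (fun s => 1 + k * (s - t0)) s k) by (auto_derive; [easy | ring]).
      pose proof (is_derive_mult _ _ s _ _ (hd s (proj1 hs)) hl (fun _ _ => Rmult_comm _ _)) as h.
      unfold plus, mult in h; simpl in h; exact h.
    - intros s [hs _].
      assert (0 <= (- k * V s - dV s) * (1 + k * (s - t0)))
        by (apply Rmult_le_pos; [pose proof (hrate s hs) | ]; nra).
      assert (0 <= k * k * (s - t0) * V s) by (apply Rmult_le_pos; [nra | easy]).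
      nra. }
  apply is_lim_spec; intros eps; simpl.
  pose proof (cond_pos eps) as heps.
  exists (t0 + V t0 / (k * eps)); intros t ht.
  assert (hT : k * eps * (V t0 / (k * eps)) = V t0) by (field; nra).
  assert (hD : 0 <= V t0 / (k * eps)) by (apply Rdiv_le_0_compat; [apply hV | nra]).
  pose proof (hW t ltac:(lra)).
  pose proof (hV t).
  rewrite Rminus_0_r, Rabs_pos_eq by easy.
  destruct (Rlt_or_le (V t) eps) as [hlt | hge]; [easy | exfalso].
  assert (k * eps * (V t0 / (k * eps)) < k * eps * (t - t0))
    by (apply Rmult_lt_compat_l; nra).
  assert (eps * (1 + k * (t - t0)) <= V t * (1 + k * (t - t0)))
    by (apply Rmult_le_compat_r; nra).
  nra.
Qed.

Lemma is_lim_of_sqr_sub_le (f V : R -> R) l :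
  (forall t, (f t - l) ^ 2 <= V t) -> is_lim V p_infty 0 -> is_lim f p_infty l.
Proof.
  intros hle hV.
  apply is_lim_spec in hV; apply is_lim_spec; intros eps; simpl in *.
  pose proof (cond_pos eps) as heps.
  destruct (hV (mkposreal _ (pow_lt _ 2 heps))) as [T hT].
  exists T; intros t ht.
  specialize (hT t ht); specialize (hle t); simpl in hT.
  rewrite Rminus_0_r in hT.
  pose proof (Rle_abs (V t)).
  rewrite <- (Rabs_pos_eq eps) by lra.
  apply Rsqr_lt_abs_0; unfold Rsqr; nra.
Qed.

Lemma lam_pos rho m : 0 < rho -> 0 < m -> 0 < lam rho m.
Proof. intros; apply sqrt_lt_R0, Rdiv_lt_0_compat; easy. Qed.

Section GradientFlow.

Variables L mp mm rp rm Sp Sm SI : R.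
Hypotheses (hmp : 0 < mp) (hmm : 0 < mm) (hrp : 0 < rp) (hrm : 0 < rm)
  (hSp : Sp < 0) (hSm : 0 < Sm).

Local Notation Hp1 := (H1p L mp mm rp rm Sp Sm SI).
Local Notation Hp2 := (H2p L mp mm rp rm Sp Sm SI).
Local Notation E := (Ep L mp mm rp rm Sp Sm SI).
Local Notation lp := (lam rp mp).
Local Notation lm := (lam rm mm).

Lemma Sm_coef_pos : 0 < Sm / rm * mm.
Proof. apply Rmult_lt_0_compat; [apply Rdiv_lt_0_compat|]; easy. Qed.

Lemma Sp_coef_neg : Sp / rp * mp < 0.
Proof.
  assert (Sp / rp < 0) by (apply Rmult_neg_pos; [easy | apply Rinv_0_lt_compat, hrp]).
  nra.
Qed.

Lemma Ep_above_tangent q1 q2 p1 p2 :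
  E q1 q2 - Hp1 q1 q2 * (p1 - q1) - Hp2 q1 q2 * (p2 - q2) <= E p1 p2.
Proof.
  pose proof Sm_coef_pos; pose proof Sp_coef_neg.
  pose proof (lncosh_above_tangent (lm * q1) (lm * p1)) as T1.
  pose proof (lncosh_above_tangent (lm * (L - q2)) (lm * (L - p2))) as T2.
  pose proof (lncosh_above_tangent (lp * ((q2 - q1) / 2)) (lp * ((p2 - p1) / 2))) as T3.
  apply (Rmult_le_compat_l (Sm / rm * mm / 2)) in T1, T2; [|lra|lra].
  apply (Rmult_le_compat_l (- (Sp / rp * mp))) in T3; [|lra].
  unfold Ep, H1p, H2p. lra.
Qed.

Lemma H1p_H2p_dissipative q1 q2 p1 p2 :
  (q1 - p1) * (Hp1 q1 q2 - Hp1 p1 p2) + (q2 - p2) * (Hp2 q1 q2 - Hp2 p1 p2)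
  <= - (Sm / rm * mm / 2) *
       ((lm * q1 - lm * p1) * (tanh (lm * q1) - tanh (lm * p1))
        + (lm * (L - q2) - lm * (L - p2)) * (tanh (lm * (L - q2)) - tanh (lm * (L - p2)))).
Proof.
  (* The coupling term is [Sp / rp * mp] times a monotone [tanh] product. *)
  pose proof Sp_coef_neg.
  pose proof (tanh_monotone (lp * ((q2 - q1) / 2)) (lp * ((p2 - p1) / 2))).
  assert (0 <= - (Sp / rp * mp) * ((lp * ((q2 - q1) / 2) - lp * ((p2 - p1) / 2))
            * (tanh (lp * ((q2 - q1) / 2)) - tanh (lp * ((p2 - p1) / 2)))))
    by (apply Rmult_le_pos; lra).
  unfold H1p, H2p. lra.
Qed.

Lemma H1p_H2p_strongly_dissipative_near p1 p2 r : exists k, 0 < k /\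
  forall q1 q2, (q1 - p1) ^ 2 + (q2 - p2) ^ 2 <= r ->
  (q1 - p1) * (Hp1 q1 q2 - Hp1 p1 p2) + (q2 - p2) * (Hp2 q1 q2 - Hp2 p1 p2)
  <= - k * ((q1 - p1) ^ 2 + (q2 - p2) ^ 2).
Proof.
  pose proof Sm_coef_pos; pose proof (lam_pos rm mm hrm hmm).
  set (M := lm * (Rabs p1 + Rabs (L - p2) + 1 + r)).
  exists (Sm / rm * mm / 2 * lm ^ 2 / exp M ^ 2); split.
  { apply Rdiv_lt_0_compat; [apply Rmult_lt_0_compat; [lra | apply pow_lt; lra] |].
    apply pow_lt, exp_pos. }
  intros q1 q2 hq.
  assert (hbound : forall x y, (x - y) ^ 2 <= r -> Rabs y <= Rabs p1 + Rabs (L - p2) ->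
            Rabs (lm * x) <= M /\ Rabs (lm * y) <= M).
  { intros x y hxy hy.
    assert (Rabs (x - y) <= 1 + r).
    { pose proof (pow2_ge_0 (x - y - 1)); pose proof (pow2_ge_0 (x - y + 1)).
      unfold Rabs; destruct Rcase_abs; nra. }
    pose proof (Rabs_triang (x - y) y); replace (x - y + y) with x in * by ring.
    rewrite !Rabs_mult, (Rabs_pos_eq lm) by lra; unfold M.
    pose proof (Rabs_pos (x - y)); split; apply Rmult_le_compat_l; lra. }
  destruct (hbound q1 p1) as [h1 h2];
    [pose proof (pow2_ge_0 (q2 - p2)); lra | pose proof (Rabs_pos (L - p2)); lra |].
  destruct (hbound (L - q2) (L - p2)) as [h3 h4];
    [replace (L - q2 - (L - p2)) with (- (q2 - p2)) by ring; pose proof (pow2_ge_0 (q1 - p1)); nra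
    | pose proof (Rabs_pos p1); lra |].
  pose proof (tanh_strongly_monotone M _ _ h1 h2) as S1.
  pose proof (tanh_strongly_monotone M _ _ h3 h4) as S2.
  apply (Rmult_le_compat_l (Sm / rm * mm / 2)) in S1, S2; [|lra|lra].
  pose proof (H1p_H2p_dissipative q1 q2 p1 p2).
  unfold Rdiv in *.
  replace ((lm * q1 - lm * p1) ^ 2) with (lm ^ 2 * (q1 - p1) ^ 2) in S1 by ring.
  replace ((lm * (L - q2) - lm * (L - p2)) ^ 2) with (lm ^ 2 * (q2 - p2) ^ 2) in S2 by ring.
  lra.
Qed.

Lemma solution_converges_to_stationary p1 p2 (q1 q2 : R -> R) :
  Hp1 p1 p2 = 0 -> Hp2 p1 p2 = 0 ->
  (forall t, 0 < t -> is_derive q1 t (Hp1 (q1 t) (q2 t)) /\ is_derive q2 t (Hp2 (q1 t) (q2 t))) ->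
  is_lim q1 p_infty p1 /\ is_lim q2 p_infty p2.
Proof.
  intros hp1 hp2 hsol.
  set (V t := (q1 t - p1) ^ 2 + (q2 t - p2) ^ 2).
  set (D t := (q1 t - p1) * Hp1 (q1 t) (q2 t) + (q2 t - p2) * Hp2 (q1 t) (q2 t)).
  assert (hV0 : forall t, 0 <= V t)
    by (intros t; pose proof (pow2_ge_0 (q1 t - p1));
        pose proof (pow2_ge_0 (q2 t - p2)); unfold V; lra).
  assert (hV' : forall t, 0 < t -> is_derive V t (2 * D t)).
  { intros t ht; destruct (hsol t ht) as [d1 d2].
    pose proof (is_derive_plus _ _ t _ _ (is_derive_sqr_sub _ _ _ p1 d1)
                  (is_derive_sqr_sub _ _ _ p2 d2)) as h.
    replace (2 * D t) with (plus (2 * (q1 t - p1) * Hp1 (q1 t) (q2 t))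
                                 (2 * (q2 t - p2) * Hp2 (q1 t) (q2 t)))
      by (unfold D, plus; simpl; ring).
    exact h. }
  assert (hVle : forall t, 1 <= t -> V t <= V 1).
  { intros t ht; apply (le_of_derive_nonpos V (fun s => 2 * D s) 1 t ht).
    - intros s hs; apply hV'; lra.
    - intros s _; pose proof (H1p_H2p_dissipative (q1 s) (q2 s) p1 p2) as h; pose proof Sm_coef_pos.
      rewrite hp1, hp2, !Rminus_0_r in h.
      pose proof (tanh_monotone (lm * q1 s) (lm * p1)).
      pose proof (tanh_monotone (lm * (L - q2 s)) (lm * (L - p2))).
      unfold D; nra. }
  destruct (H1p_H2p_strongly_dissipative_near p1 p2 (V 1)) as [k [hk hstrong]].
  assert (hVlim : is_lim V p_infty 0).
  { apply (gronwall_is_lim_0 V (fun s => 2 * D s) 1 (2 * k)); [lra | easy | |].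
    - intros t ht; apply hV'; lra.
    - intros t ht; pose proof (hstrong (q1 t) (q2 t) (hVle t ht)) as h.
      rewrite hp1, hp2, !Rminus_0_r in h; unfold D, V in *; lra. }
  split; apply (is_lim_of_sqr_sub_le _ V); try easy; intros t; unfold V;
    [pose proof (pow2_ge_0 (q2 t - p2)) | pose proof (pow2_ge_0 (q1 t - p1))]; lra.
Qed.

Local Notation sym_stat := (sym_stationary L mp mm rp rm Sp Sm SI).

Lemma sym_stationary_iff a b : sym_stat a b <-> b = L - a /\ Hp2 a (L - a) = 0.
Proof.
  assert (hsym : Hp1 a (L - a) = - Hp2 a (L - a))
    by (unfold H1p, H2p; replace (L - (L - a)) with a by ring; ring).
  unfold sym_stationary; split.
  - intros (_ & h2 & ->); split; [ring|]. now replace (L - (L - b)) with b by ring.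
  - intros (-> & h2); rewrite hsym, h2. repeat split; ring.
Qed.

Lemma H2p_sym_lt x y : x < y -> Hp2 x (L - x) < Hp2 y (L - y).
Proof.
  intros hxy.
  pose proof Sp_coef_neg; pose proof Sm_coef_pos.
  pose proof (lam_pos rp mp hrp hmp); pose proof (lam_pos rm mm hrm hmm).
  assert (Sm / rm * mm * lm * tanh (lm * x) < Sm / rm * mm * lm * tanh (lm * y))
    by (apply Rmult_lt_compat_l, tanh_lt; nra).
  assert (Sp / rp * mp * lp * tanh (lp * ((L - x - x) / 2))
          < Sp / rp * mp * lp * tanh (lp * ((L - y - y) / 2)))
    by (apply Rmult_lt_gt_compat_neg_l, tanh_lt; nra).
  unfold H2p; replace (L - (L - x)) with x by ring; replace (L - (L - y)) with y by ring.
  lra.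
Qed.

Lemma sym_stationary_unique a b a' b' : sym_stat a b -> sym_stat a' b' -> a = a' /\ b = b'.
Proof.
  intros [-> h]%sym_stationary_iff [-> h']%sym_stationary_iff.
  destruct (Rtotal_order a a') as [hlt | [-> | hgt]].
  - pose proof (H2p_sym_lt a a' hlt); lra.
  - split; reflexivity.
  - pose proof (H2p_sym_lt a' a hgt); lra.
Qed.

Lemma continuity_H2p_sym : continuity (fun x => Hp2 x (L - x)).
Proof.
  intros x; apply continuity_pt_filterlim, (ex_derive_continuous (fun x => Hp2 x (L - x))).
  unfold H2p; auto_derive.
  split; [|split; [|easy]]; eexists; apply is_derive_tanh.
Qed.

Lemma sym_stationary_exists : 0 < L -> SI = 0 -> exists z, 0 < z < L / 2 /\ sym_stat z (L - z).
Proof.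
  intros hL hSI.
  pose proof Sp_coef_neg; pose proof Sm_coef_pos.
  pose proof (lam_pos rp mp hrp hmp); pose proof (lam_pos rm mm hrm hmm).
  assert (Sp / rp * mp * lp < 0) by nra; assert (0 < Sm / rm * mm * lm) by nra.
  assert (htanh0 : tanh 0 = 0) by (unfold tanh; rewrite sinh_0; apply Rdiv_0_l).
  assert (hg0 : Hp2 0 (L - 0) < 0).
  { pose proof (tanh_lt 0 (lp * ((L - 0 - 0) / 2)) ltac:(nra)).
    unfold H2p; rewrite hSI; replace (L - (L - 0)) with 0 by ring.
    rewrite Rmult_0_r, htanh0 in *; nra. }
  assert (hgL : 0 < Hp2 (L / 2) (L - L / 2)).
  { pose proof (tanh_lt 0 (lm * (L / 2)) ltac:(nra)).
    unfold H2p; rewrite hSI; replace (L - (L - L / 2)) with (L / 2) by field.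
    replace (L - L / 2 - L / 2) with 0 by field.
    rewrite Rdiv_0_l, Rmult_0_r, htanh0 in *; nra. }
  destruct (IVT _ 0 (L / 2) continuity_H2p_sym ltac:(lra) hg0 hgL) as [z [hz hgz]].
  exists z; split.
  - split; [destruct (Req_dec z 0) | destruct (Req_dec z (L / 2))]; subst; lra.
  - apply sym_stationary_iff; split; [ring | exact hgz].
Qed.

End GradientFlow.

Theorem proposition4p3 (L mp mm rp rm Sp Sm : R)
  (hL : 0 < L) (hmp : 0 < mp) (hmm : 0 < mm) (hrp : 0 < rp) (hrm : 0 < rm)
  (hSp : Sp < 0) (hSm : 0 < Sm) :
  exists q1s q2s : R,
    sym_stationary L mp mm rp rm Sp Sm 0 q1s q2s /\
    (forall a b, sym_stationary L mp mm rp rm Sp Sm 0 a b -> a = q1s /\ b = q2s) /\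
    0 < q1s < L / 2 /\
    inT L q1s q2s /\
    (forall a b, inT L a b ->
       Ep L mp mm rp rm Sp Sm 0 q1s q2s <= Ep L mp mm rp rm Sp Sm 0 a b) /\
    (forall q1 q2 : R -> R,
       is_solution L mp mm rp rm Sp Sm 0 q1 q2 ->
       inT L (q1 0) (q2 0) ->
       is_lim q1 p_infty q1s /\ is_lim q2 p_infty q2s).
Proof.
  destruct (sym_stationary_exists L mp mm rp rm Sp Sm 0 hmp hmm hrp hrm hSp hSm hL eq_refl)
    as [z [hz hst]].
  pose proof hst as (h1 & h2 & _).
  exists z, (L - z).
  split; [exact hst |].
  split; [intros a b hab; eapply (sym_stationary_unique L mp mm rp rm Sp Sm 0); eassumption |].
  split; [exact hz |].
  split; [unfold inT; lra |].
  split.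
  - intros a b _.
    pose proof (Ep_above_tangent L mp mm rp rm Sp Sm 0 hmp hmm hrp hrm hSp hSm z (L - z) a b).
    rewrite h1, h2 in *; lra.
  - (* Convergence holds from every initial datum. *)
    intros q1 q2 [hsol _] _.
    eapply (solution_converges_to_stationary L mp mm rp rm Sp Sm 0); eassumption.
Qed.
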